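(* If $F:\mathbb{R}\to\mathbb{R}$ is a Darboux function which is continuous at only countably many points, then there is a non-constant continuous function $f:\mathbb{R}\to\mathbb{R}$ such that $F+f$ is Darboux.
   Context: A function $F:\mathbb{R}\to\mathbb{R}$ is Darboux if the image under $F$ of every interval is an interval. *)

From Stdlib Require Import Reals.
Open Scope R_scope.

Definition is_interval (S : R -> Prop) : Prop :=
  forall a b c, S a -> S b -> a <= c <= b -> S c.

Definition image (F : R -> R) (S : R -> Prop) : R -> Prop :=
  fun y => exists x, S x /\ y = F x.

Definition Darboux (F : R -> R) : Prop :=
  forall I : R -> Prop, is_interval I -> is_interval (image F I).

Definition countable_set (S : R -> Prop) : Prop :=
  exists g : R -> nat, forall x y, S x -> S y -> g x = g y -> x = y.

(* A Baire category argument gives an interval [u, v] and values l1 < l2 such that F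
   takes every value of [l1, l2] on every nondegenerate subinterval of [u, v]: otherwise
   nested intervals, one step for each rational interval of values and each continuity
   point (there are countably many of both), would shrink to a point that is neither a
   continuity point nor a discontinuity point, since at a discontinuity a Darboux function
   takes all values of some rational interval in every neighbourhood.
   Pick a sequence s with (s n, F (s n)) dense in the graph of F, and let f be a
   Cantor-type staircase: nondecreasing, 1-Lipschitz, rising by at least d / 2 on some
   [p, p + d] inside (u, v) with d <= (l2 - l1) / 2, constant outside [p, p + d], and
   constant near every s n.  Outside [p, p + d], F + f is F shifted by a constant.  Inside
   (u, v), a value w strictly between two values of F + f lies between l2 and some
   (F + f) (s n); near s n the function f is a constant c and F reaches l2 - c, so by the
   Darboux property F + f reaches w. *)

From Stdlib Require Import Reals Lra Lia Classical ClassicalEpsilon Cantor.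
Open Scope R_scope.

Definition between (x y z : R) : Prop := x <= z <= y \/ y <= z <= x.

Lemma between_interval x y : is_interval (between x y).
Proof. unfold between; intros a b c Ha Hb Hc; lra. Qed.

Lemma Darboux_between F x y w :
  Darboux F -> between (F x) (F y) w -> exists c, between x y c /\ F c = w.
Proof.
  intros HD Hw.
  assert (Hx : image F (between x y) (F x)) by (exists x; split; [red; lra | reflexivity]).
  assert (Hy : image F (between x y) (F y)) by (exists y; split; [red; lra | reflexivity]).
  destruct Hw as [Hw | Hw];
    [ destruct (HD _ (between_interval x y) _ _ _ Hx Hy Hw) as [c [Hc ->]]
    | destruct (HD _ (between_interval x y) _ _ _ Hy Hx Hw) as [c [Hc ->]] ];
    now exists c.
Qed.

Definition ivt_on (G : R -> R) (a b : R) : Prop :=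
  forall w, between (G a) (G b) w -> exists c, a <= c <= b /\ G c = w.

Lemma Darboux_of_ivt_on G : (forall a b, a <= b -> ivt_on G a b) -> Darboux G.
Proof.
  intros H I HI y1 y2 y [x1 [Hx1 ->]] [x2 [Hx2 ->]] Hy.
  destruct (Rle_dec x1 x2) as [Hx | Hx].
  - destruct (H x1 x2 Hx y (or_introl Hy)) as [c [Hc <-]].
    exists c; split; [exact (HI x1 x2 c Hx1 Hx2 Hc) | reflexivity].
  - destruct (H x2 x1 ltac:(lra) y (or_intror Hy)) as [c [Hc <-]].
    exists c; split; [exact (HI x2 x1 c Hx2 Hx1 Hc) | reflexivity].
Qed.

Lemma ivt_on_split G a m b :
  a <= m <= b -> ivt_on G a m -> ivt_on G m b -> ivt_on G a b.
Proof.
  intros Hm Hl Hr w Hw.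
  assert (Hside : between (G a) (G m) w \/ between (G m) (G b) w)
    by (unfold between in *; lra).
  destruct Hside as [Hw' | Hw'].
  - destruct (Hl w Hw') as [c [Hc <-]]. exists c; split; [lra | reflexivity].
  - destruct (Hr w Hw') as [c [Hc <-]]. exists c; split; [lra | reflexivity].
Qed.

Lemma ivt_on_add_const F f a b k :
  Darboux F -> a <= b -> (forall z, a <= z <= b -> f z = k) ->
  ivt_on (fun x => F x + f x) a b.
Proof.
  intros HD Hab Hk w Hw.
  rewrite (Hk a), (Hk b) in Hw by lra.
  destruct (Darboux_between F a b (w - k) HD ltac:(red in Hw |- *; lra)) as [c [Hc Hc']].
  assert (Hca : a <= c <= b) by (red in Hc; lra).
  exists c; split; [exact Hca | rewrite (Hk c Hca); lra].
Qed.

Lemma ivt_on_of_cover G u p q v :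
  u < p -> p < q -> q < v ->
  (forall a b, a <= b -> b <= p -> ivt_on G a b) ->
  (forall a b, u < a -> a <= b -> b < v -> ivt_on G a b) ->
  (forall a b, q <= a -> a <= b -> ivt_on G a b) ->
  forall a b, a <= b -> ivt_on G a b.
Proof.
  intros Hup Hpq Hqv Hleft Hmid Hright a b Hab.
  destruct (Rle_dec b p); [now apply Hleft |].
  destruct (Rle_dec q a); [now apply Hright |].
  assert (Hmid_right : forall a', u < a' -> a' <= b -> a' < q -> ivt_on G a' b).
  { intros a' Ha' Ha'b Ha'q. destruct (Rlt_dec b v); [apply Hmid; lra |].
    apply (ivt_on_split G a' q b); [lra | apply Hmid | apply Hright]; lra. }
  destruct (Rlt_dec u a); [apply Hmid_right; lra |].
  apply (ivt_on_split G a p b); [lra | apply Hleft | apply Hmid_right]; lra.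
Qed.

Lemma Darboux_close_inside F a b p e :
  Darboux F -> a < b -> a <= p <= b -> 0 < e ->
  exists t, a < t < b /\ Rabs (F t - F p) < e.
Proof.
  intros HD Hab Hp He.
  set (m := (a + b) / 2).
  destruct (Rlt_dec (Rabs (F m - F p)) e) as [Hm | Hm].
  { exists m; split; [unfold m; lra | exact Hm]. }
  (* Otherwise a value at distance e/2 from F p is taken between p and m, away from p. *)
  set (w := if Rle_dec (F p) (F m) then F p + e / 2 else F p - e / 2).
  assert (Hw : between (F p) (F m) w /\ Rabs (w - F p) < e /\ w <> F p).
  { unfold w; revert Hm; unfold Rabs, between;
      destruct Rle_dec, Rcase_abs, Rcase_abs; intros; repeat split; lra. }
  destruct Hw as [Hw [Hwe Hwp]].
  destruct (Darboux_between F p m w HD Hw) as [c [Hc <-]].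
  assert (Hcp : c <> p) by (intros ->; exact (Hwp eq_refl)).
  exists c; split; [| exact Hwe].
  unfold m, between in *. destruct (Rdichotomy _ _ Hcp); lra.
Qed.

Lemma continuity_pt_intro F x :
  (forall e, 0 < e -> exists d, 0 < d /\
     forall y, Rabs (y - x) < d -> Rabs (F y - F x) < e) ->
  continuity_pt F x.
Proof.
  intros H e He. destruct (H e He) as [d [Hd Hy]].
  exists d; split; [exact Hd |]. intros y [_ Hyx]. exact (Hy y Hyx).
Qed.

Lemma Rabs_incr_le (f : R -> R) :
  (forall x y, x <= y -> 0 <= f y - f x <= y - x) ->
  forall x y, Rabs (f y - f x) <= Rabs (y - x).
Proof.
  intros Hf x y. destruct (Rle_dec x y) as [Hxy | Hxy].
  - pose proof (Hf x y Hxy). rewrite !Rabs_right; lra.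
  - pose proof (Hf y x ltac:(lra)). rewrite !Rabs_left1; lra.
Qed.

Lemma lipschitz_continuity (f : R -> R) :
  (forall x y, Rabs (f y - f x) <= Rabs (y - x)) -> continuity f.
Proof.
  intros Hf x. apply continuity_pt_intro. intros e He.
  exists e; split; [exact He |]. intros y Hy. exact (Rle_lt_trans _ _ _ (Hf x y) Hy).
Qed.

Lemma discontinuity_jump F x :
  ~ continuity_pt F x ->
  exists e, 0 < e /\
    forall a b, a < x < b -> exists y, a < y < b /\ e <= Rabs (F y - F x).
Proof.
  intros Hdisc. apply NNPP; intro Hno. apply Hdisc, continuity_pt_intro. intros e He.
  assert (H : ~ forall a b, a < x < b -> exists y, a < y < b /\ e <= Rabs (F y - F x))
    by (intro H; apply Hno; exists e; split; assumption).
  apply not_all_ex_not in H as [a H]. apply not_all_ex_not in H as [b H].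
  apply imply_to_and in H as [Hab H].
  exists (Rmin (x - a) (b - x)); split; [apply Rmin_pos; lra |].
  intros y Hy. apply Rnot_le_lt; intro Hle. apply H; exists y; split; [| exact Hle].
  apply Rabs_def2 in Hy. pose proof (Rmin_l (x - a) (b - x)).
  pose proof (Rmin_r (x - a) (b - x)). lra.
Qed.

Definition covers (F : R -> R) (a b l1 l2 : R) : Prop :=
  forall l, l1 <= l <= l2 -> exists c, a < c < b /\ F c = l.

Definition locally_covers (F : R -> R) (l1 l2 x : R) : Prop :=
  forall a b, a < x < b -> covers F a b l1 l2.

Lemma Darboux_covers F a b x y l1 l2 :
  Darboux F -> a < x < b -> a < y < b ->
  between (F x) (F y) l1 -> between (F x) (F y) l2 -> covers F a b l1 l2.
Proof.
  intros HD Hx Hy Hl1 Hl2 l Hl.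
  destruct (Darboux_between F x y l HD ltac:(red in Hl1, Hl2 |- *; lra)) as [c [Hc <-]].
  exists c; split; [red in Hc; lra | reflexivity].
Qed.

Lemma discontinuity_locally_covers F x :
  Darboux F -> ~ continuity_pt F x ->
  exists l1 l2, l1 < l2 /\ locally_covers F l1 l2 x.
Proof.
  intros HD Hdisc. destruct (discontinuity_jump F x Hdisc) as [e [He Hjump]].
  destruct (classic (locally_covers F (F x) (F x + e) x)) as [Hup | Hup].
  { exists (F x), (F x + e); split; [lra | exact Hup]. }
  (* Values above F x are missed near x, so the jumps near x go downwards. *)
  exists (F x - e), (F x); split; [lra |].
  apply not_all_ex_not in Hup as [a0 Hup]. apply not_all_ex_not in Hup as [b0 Hup].
  apply imply_to_and in Hup as [Hx0 Hup].
  intros a b Hx.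
  destruct (Hjump (Rmax a a0) (Rmin b b0)) as [y [Hy Hjy]].
  { split; [apply Rmax_lub_lt | apply Rmin_glb_lt]; lra. }
  pose proof (Rmax_l a a0); pose proof (Rmax_r a a0).
  pose proof (Rmin_l b b0); pose proof (Rmin_r b b0).
  destruct (Rle_lt_dec (F x + e) (F y)) as [Hhigh | Hlow].
  - exfalso; apply Hup.
    apply (Darboux_covers F a0 b0 x y); [exact HD | lra | lra | red; lra | red; lra].
  - assert (F y <= F x - e)
      by (revert Hjy; unfold Rabs; destruct Rcase_abs; intros; lra).
    apply (Darboux_covers F a b x y); [exact HD | lra | lra | red; lra | red; lra].
Qed.

(* n = <k, <p, q>> enumerates the grid intervals [m / (k+1), (m+1) / (k+1)], m = p - q in Z. *)
Definition cell (n : nat) : R * R :=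
  let '(k, pq) := Cantor.of_nat n in
  let '(p, q) := Cantor.of_nat pq in
  ((INR p - INR q) / INR (S k), (INR p - INR q + 1) / INR (S k)).

Lemma cell_lt n : fst (cell n) < snd (cell n).
Proof.
  unfold cell.
  destruct (Cantor.of_nat n) as [k pq], (Cantor.of_nat pq) as [p q]; cbn [fst snd].
  unfold Rdiv. apply Rmult_lt_compat_r; [apply Rinv_0_lt_compat, lt_0_INR; lia | lra].
Qed.

Lemma IZR_INR_diff (z : Z) : exists p q : nat, IZR z = INR p - INR q.
Proof.
  exists (Z.to_nat z), (Z.to_nat (- z)).
  rewrite !INR_IZR_INZ, <- minus_IZR. f_equal. lia.
Qed.

Lemma cell_inside lo hi y :
  lo < y < hi ->
  exists n, lo < fst (cell n) /\ fst (cell n) <= y <= snd (cell n) /\ snd (cell n) < hi.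
Proof.
  intros Hy.
  destruct (archimed_cor1 (Rmin (y - lo) (hi - y))) as [N [HN HN0]];
    [apply Rmin_pos; lra |].
  pose proof (Rmin_l (y - lo) (hi - y)); pose proof (Rmin_r (y - lo) (hi - y)).
  (* Grid of mesh 1/N: the cell [m/N, (m+1)/N] with m = floor (y N). *)
  set (m := Int_part (y * INR N)).
  destruct (base_Int_part (y * INR N)) as [Hm1 Hm2]; fold m in Hm1, Hm2.
  destruct (IZR_INR_diff m) as [p [q Hpq]].
  exists (Cantor.to_nat (Nat.pred N, Cantor.to_nat (p, q))).
  unfold cell. rewrite !Cantor.cancel_of_to. cbn [fst snd].
  rewrite <- Hpq, (Nat.succ_pred_pos N HN0).
  assert (HNpos : 0 < INR N) by (apply lt_0_INR; exact HN0).
  set (z := / INR N) in *.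
  assert (Hz : 0 < z) by (apply Rinv_0_lt_compat; exact HNpos).
  assert (Hyz : y * INR N * z = y) by (unfold z; field; lra).
  assert (Hlow : (y * INR N - 1) * z < IZR m * z) by (apply Rmult_lt_compat_r; lra).
  assert (Hup : IZR m * z <= y * INR N * z) by (apply Rmult_le_compat_r; lra).
  unfold Rdiv; fold z. repeat split; lra.
Qed.

Lemma locally_covers_cell F l1 l2 x :
  l1 < l2 -> locally_covers F l1 l2 x ->
  exists n, locally_covers F (fst (cell n)) (snd (cell n)) x.
Proof.
  intros Hl Hcov. destruct (cell_inside l1 l2 ((l1 + l2) / 2)) as [n [Hn1 [_ Hn2]]]; [lra |].
  exists n. intros a b Hx l Hlc. apply (Hcov a b Hx). lra.
Qed.

Lemma nested_intervals (a b : nat -> R) :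
  (forall n, a n <= b n) -> (forall n, a n <= a (S n) /\ b (S n) <= b n) ->
  exists z, forall n, a n <= z <= b n.
Proof.
  intros Hab Hnest.
  assert (Ha : forall n m, (n <= m)%nat -> a n <= a m).
  { intros n m Hnm; induction Hnm; [lra | pose proof (Hnest m); lra]. }
  assert (Hb : forall n m, (n <= m)%nat -> b m <= b n).
  { intros n m Hnm; induction Hnm; [lra | pose proof (Hnest m); lra]. }
  assert (Hanbm : forall n m, a n <= b m).
  { intros n m. pose proof (Ha n (Nat.max n m) (Nat.le_max_l n m)).
    pose proof (Hb m (Nat.max n m) (Nat.le_max_r n m)).
    pose proof (Hab (Nat.max n m)). lra. }
  destruct (completeness (fun y => exists n, y = a n)) as [z [Hub Hlub]].
  - exists (b O); intros y [n ->]; apply Hanbm.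
  - exists (a O), O; reflexivity.
  - exists z; intro n; split.
    + apply Hub; exists n; reflexivity.
    + apply Hlub; intros y [k ->]; apply Hanbm.
Qed.

Lemma nested_intervals_choice (Q : nat -> R -> R -> Prop) :
  (forall n a b, a < b -> exists a' b', a <= a' /\ a' < b' /\ b' <= b /\ Q n a' b') ->
  exists z, forall n, exists a b, a <= z <= b /\ Q n a b.
Proof.
  intros Hstep.
  destruct (choice (fun (nI : nat * (R * R)) (J : R * R) =>
      fst (snd nI) < snd (snd nI) ->
      fst (snd nI) <= fst J /\ fst J < snd J /\ snd J <= snd (snd nI) /\
      Q (fst nI) (fst J) (snd J)))
    as [next Hnext].
  { intros [n [a b]]; cbn [fst snd].
    destruct (Rlt_dec a b) as [Hab | Hab].
    - destruct (Hstep n a b Hab) as [a' [b' H]]. exists (a', b'). intros _; exact H.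
    - exists (0, 0). intro; contradiction. }
  set (I := fix I n := match n with O => (0, 1) | S n => next (n, I n) end).
  assert (HI : forall n, fst (I n) < snd (I n)).
  { induction n as [| n IH]; [cbn; lra | apply (Hnext (n, I n) IH)]. }
  destruct (nested_intervals (fun n => fst (I n)) (fun n => snd (I n))) as [z Hz].
  - intro n; apply Rlt_le, HI.
  - intro n. destruct (Hnext (n, I n) (HI n)) as [H1 [_ [H2 _]]]. split; assumption.
  - exists z; intro n. exists (fst (I (S n))), (snd (I (S n))); split; [apply Hz |].
    apply (Hnext (n, I n) (HI n)).
Qed.

Lemma interval_avoid_point a b c :
  a < b -> exists a' b', a < a' /\ a' < b' /\ b' < b /\ ~ (a' <= c <= b').
Proof.
  intros Hab. set (h := (b - a) / 5).
  destruct (Rle_dec c (a + 2 * h)).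
  - exists (a + 3 * h), (a + 4 * h). unfold h in *; lra.
  - exists (a + h), (a + 2 * h). unfold h in *; lra.
Qed.

Lemma uniformly_covering_interval F :
  Darboux F -> countable_set (fun x => continuity_pt F x) ->
  exists u v l1 l2, u < v /\ l1 < l2 /\
    forall a b, u <= a -> a < b -> b <= v -> covers F a b l1 l2.
Proof.
  intros HD [g Hg]. apply NNPP; intro Hnone.
  assert (Hbad : forall n a b, a < b ->
            exists a1 b1, a <= a1 /\ a1 < b1 /\ b1 <= b /\
              ~ covers F a1 b1 (fst (cell n)) (snd (cell n))).
  { intros n a b Hab. apply NNPP; intro H. apply Hnone.
    exists a, b, (fst (cell n)), (snd (cell n)).
    split; [exact Hab | split; [apply cell_lt |]].
    intros a1 b1 Ha1 Hab1 Hb1. apply NNPP; intro Hc. apply H. exists a1, b1; auto. }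
  (* g is injective on continuity points, so each index n is hit at most once. *)
  assert (Hsingle : forall n, exists c, forall x, continuity_pt F x -> g x = n -> x = c).
  { intro n. destruct (classic (exists c, continuity_pt F c /\ g c = n)) as [[c [Hc Hgc]] | Hno].
    - exists c; intros x Hx Hgx. apply Hg; [exact Hx | exact Hc | congruence].
    - exists 0; intros x Hx Hgx. exfalso; apply Hno; exists x; split; assumption. }
  destruct (nested_intervals_choice (fun n a b => forall x, a <= x <= b ->
              ~ locally_covers F (fst (cell n)) (snd (cell n)) x /\
              ~ (continuity_pt F x /\ g x = n))) as [z Hz].
  { intros n a b Hab.
    destruct (Hbad n a b Hab) as [a1 [b1 [Ha1 [Hab1 [Hb1 Hnc]]]]].
    destruct (Hsingle n) as [c Hc].
    destruct (interval_avoid_point a1 b1 c Hab1) as [a' [b' [Ha' [Hab' [Hb' Hnot]]]]].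
    exists a', b'; split; [lra | split; [exact Hab' | split; [lra |]]].
    intros x Hx; split.
    - intro Hloc; apply Hnc, Hloc; lra.
    - intros [Hcx Hgx]; apply Hnot; rewrite <- (Hc x Hcx Hgx); exact Hx. }
  destruct (classic (continuity_pt F z)) as [Hcz | Hcz].
  - destruct (Hz (g z)) as [a [b [Hzab HQ]]]. exact (proj2 (HQ z Hzab) (conj Hcz eq_refl)).
  - destruct (discontinuity_locally_covers F z HD Hcz) as [l1 [l2 [Hl Hloc]]].
    destruct (locally_covers_cell F l1 l2 z Hl Hloc) as [n Hn].
    destruct (Hz n) as [a [b [Hzab HQ]]]. exact (proj1 (HQ z Hzab) Hn).
Qed.

Lemma graph_dense_seq F : exists s : nat -> R,
  forall t lo hi e, lo < t < hi -> 0 < e ->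
    exists n, lo < s n < hi /\ Rabs (F (s n) - F t) < e.
Proof.
  set (in_box n x := let '(i, j) := Cantor.of_nat n in
         fst (cell i) <= x <= snd (cell i) /\ fst (cell j) <= F x <= snd (cell j)).
  destruct (choice (fun n x => (exists t, in_box n t) -> in_box n x)) as [s Hs].
  { intro n. destruct (classic (exists t, in_box n t)) as [[t Ht] | Hno].
    - exists t; intros _; exact Ht.
    - exists 0; intro H; contradiction. }
  exists s; intros t lo hi e Ht He.
  destruct (cell_inside lo hi t Ht) as [i [Hi1 [Hi2 Hi3]]].
  destruct (cell_inside (F t - e) (F t + e) (F t)) as [j [Hj1 [Hj2 Hj3]]]; [lra |].
  exists (Cantor.to_nat (i, j)).
  assert (Hbox : in_box (Cantor.to_nat (i, j)) (s (Cantor.to_nat (i, j)))).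
  { apply Hs; exists t; unfold in_box; rewrite Cantor.cancel_of_to; split; assumption. }
  unfold in_box in Hbox; rewrite Cantor.cancel_of_to in Hbox.
  split; [lra | apply Rabs_def1; lra].
Qed.

Definition clamp (a b x : R) : R := Rmax a (Rmin x b).

Ltac clamp_cases := unfold clamp, Rmax, Rmin; repeat destruct Rle_dec; lra.

Lemma clamp_between a b x : a <= b -> a <= clamp a b x <= b.
Proof. intros; clamp_cases. Qed.

Lemma clamp_id a b x : a <= x <= b -> clamp a b x = x.
Proof. intros; clamp_cases. Qed.

Lemma clamp_mono a b x y : x <= y -> clamp a b x <= clamp a b y.
Proof. intros; clamp_cases. Qed.

Lemma clamp_incr_le a b x y : a <= b -> x <= y -> clamp a b y - clamp a b x <= y - x.
Proof. intros; clamp_cases. Qed.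

Lemma clamp_eq_or_inside a b x y : a <= b -> x <= y ->
  clamp a b x = clamp a b y \/ (x <= clamp a b x /\ clamp a b y <= y).
Proof. intros; unfold clamp, Rmax, Rmin; repeat destruct Rle_dec; (left; lra) || (right; lra). Qed.

Lemma clamp_left a b x : x <= a -> clamp a b x = a.
Proof. intros; clamp_cases. Qed.

Lemma clamp_le a b x : a <= x -> clamp a b x <= x.
Proof. intros; clamp_cases. Qed.

Definition flatten (g : R -> R) (a b x : R) : R := g x - (g (clamp a b x) - g a).

Section Flatten.
Variables (g : R -> R) (a b : R).
Hypothesis a_le_b : a <= b.
Hypothesis g_mono : forall x y, x <= y -> g x <= g y.

Lemma flatten_incr x y : x <= y ->
  0 <= flatten g a b y - flatten g a b x <= g y - g x.
Proof.
  intros Hxy. unfold flatten.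
  pose proof (g_mono _ _ (clamp_mono a b x y Hxy)).
  destruct (clamp_eq_or_inside a b x y a_le_b Hxy) as [-> | [Hx Hy]].
  - pose proof (g_mono _ _ Hxy); lra.
  - pose proof (g_mono _ _ Hx); pose proof (g_mono _ _ Hy); lra.
Qed.

Lemma flatten_const x : a <= x <= b -> flatten g a b x = g a.
Proof. intros Hx. unfold flatten. rewrite clamp_id by exact Hx. ring. Qed.

Lemma flatten_le x : flatten g a b x <= g x.
Proof.
  unfold flatten. pose proof (g_mono _ _ (proj1 (clamp_between a b x a_le_b))). lra.
Qed.

Lemma flatten_ge x : g x - (g b - g a) <= flatten g a b x.
Proof.
  unfold flatten. pose proof (g_mono _ _ (proj2 (clamp_between a b x a_le_b))). lra.
Qed.

Lemma flatten_nonneg x : (forall y, 0 <= g y) -> 0 <= flatten g a b x.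
Proof.
  intros Hg. unfold flatten. destruct (Rle_dec x a) as [Hxa | Hxa].
  - rewrite clamp_left by assumption. pose proof (Hg x); lra.
  - pose proof (g_mono _ _ (clamp_le a b x ltac:(lra))). pose proof (Hg a); lra.
Qed.
End Flatten.

Section Staircase.
Variables (g0 : R -> R) (a b : nat -> R).
Hypothesis a_le_b : forall n, a n <= b n.
Hypothesis g0_mono : forall x y, x <= y -> g0 x <= g0 y.
Hypothesis g0_nonneg : forall x, 0 <= g0 x.

Fixpoint staircase (N : nat) : R -> R :=
  match N with
  | O => g0
  | S N => flatten (staircase N) (a N) (b N)
  end.

Lemma staircase_mono N x y : x <= y -> staircase N x <= staircase N y.
Proof.
  revert x y; induction N as [| N IH]; intros x y Hxy; [exact (g0_mono x y Hxy) |].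
  pose proof (flatten_incr _ _ _ (a_le_b N) IH x y Hxy). cbn [staircase]; lra.
Qed.

Lemma staircase_incr_le N M x y : (N <= M)%nat -> x <= y ->
  staircase M y - staircase M x <= staircase N y - staircase N x.
Proof.
  intros HNM Hxy; induction HNM as [| M _ IH]; [lra |].
  pose proof (flatten_incr _ _ _ (a_le_b M) (staircase_mono M) x y Hxy).
  cbn [staircase]; lra.
Qed.

Lemma staircase_decr N M x : (N <= M)%nat -> staircase M x <= staircase N x.
Proof.
  intros HNM; induction HNM as [| M _ IH]; [lra |].
  pose proof (flatten_le _ _ _ (a_le_b M) (staircase_mono M) x). cbn [staircase]; lra.
Qed.

Lemma staircase_nonneg N x : 0 <= staircase N x.
Proof.
  revert x; induction N as [| N IH]; intro x; [apply g0_nonneg |].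
  apply flatten_nonneg; [apply staircase_mono | exact IH].
Qed.

Lemma staircase_const n x : a n <= x <= b n -> staircase (S n) x = staircase n (a n).
Proof. exact (flatten_const _ _ _ x). Qed.

Lemma staircase_S_ge N x :
  staircase N x - (g0 (b N) - g0 (a N)) <= staircase (S N) x.
Proof.
  pose proof (flatten_ge _ _ _ (a_le_b N) (staircase_mono N) x).
  pose proof (staircase_incr_le 0 N _ _ (Nat.le_0_l N) (a_le_b N)).
  cbn [staircase] in *; lra.
Qed.

Section Limit.
Variable f : R -> R.
Hypothesis f_inf : forall x, (forall N, f x <= staircase N x) /\
  (forall m, (forall N, m <= staircase N x) -> m <= f x).

Lemma staircase_limit_incr N x y : x <= y ->
  0 <= f y - f x <= staircase N y - staircase N x.
Proof.
  intros Hxy. split.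
  - enough (f x <= f y) by lra.
    apply (proj2 (f_inf y)); intro M.
    pose proof (proj1 (f_inf x) M). pose proof (staircase_mono M x y Hxy). lra.
  - enough (f y - (staircase N y - staircase N x) <= f x) by lra.
    apply (proj2 (f_inf x)); intro M.
    set (K := Nat.max M N).
    pose proof (staircase_decr M K x (Nat.le_max_l M N)).
    pose proof (staircase_incr_le N K x y (Nat.le_max_r M N) Hxy).
    pose proof (proj1 (f_inf y) K). lra.
Qed.

Lemma staircase_limit_const n x y : a n <= x <= b n -> a n <= y <= b n -> f x = f y.
Proof.
  (* On [a n, b n] the staircase of rank n + 1 is flat, and f increases less than it. *)
  intros Hx Hy. destruct (Rle_dec x y) as [Hxy | Hxy];
    [ pose proof (staircase_limit_incr (S n) x y Hxy) as Hincr
    | pose proof (staircase_limit_incr (S n) y x ltac:(lra)) as Hincr ];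
    rewrite !staircase_const in Hincr by assumption; lra.
Qed.
End Limit.
End Staircase.

Lemma seq_inf_exists (u : nat -> R) (m0 : R) : (forall n, m0 <= u n) ->
  exists l, (forall n, l <= u n) /\ (forall m, (forall n, m <= u n) -> m <= l).
Proof.
  intros Hu.
  destruct (completeness (fun y => exists n, y = - u n)) as [z [Hub Hlub]].
  - exists (- m0); intros y [n ->]; pose proof (Hu n); lra.
  - exists (- u O), O; reflexivity.
  - exists (- z); split.
    + intro n. assert (- u n <= z) by (apply Hub; exists n; reflexivity). lra.
    + intros m Hm.
      assert (z <= - m) by (apply Hlub; intros y [n ->]; pose proof (Hm n); lra). lra.
Qed.

Definition ramp (p0 d x : R) : R := clamp p0 (p0 + d) x - p0.

Section RampStaircase.
Variables (p0 d : R) (s : nat -> R).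
Hypothesis d_pos : 0 < d.

Lemma ramp_incr x y : x <= y -> 0 <= ramp p0 d y - ramp p0 d x <= y - x.
Proof.
  intros Hxy; unfold ramp. pose proof (clamp_mono p0 (p0 + d) x y Hxy).
  pose proof (clamp_incr_le p0 (p0 + d) x y ltac:(lra) Hxy). lra.
Qed.

Lemma ramp_mono x y : x <= y -> ramp p0 d x <= ramp p0 d y.
Proof. intros Hxy. pose proof (ramp_incr x y Hxy). lra. Qed.

Lemma ramp_between x : 0 <= ramp p0 d x <= d.
Proof. unfold ramp. pose proof (clamp_between p0 (p0 + d) x ltac:(lra)). lra. Qed.

Lemma ramp_left x : x <= p0 -> ramp p0 d x = 0.
Proof. intros Hx. unfold ramp. rewrite clamp_left by exact Hx. ring. Qed.

Lemma ramp_right x : p0 + d <= x -> ramp p0 d x = d.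
Proof. intros Hx. unfold ramp. clamp_cases. Qed.

Definition radius (n : nat) : R := d / 2 ^ (S (S (S n))).

Lemma radius_pos n : 0 < radius n.
Proof. unfold radius. apply Rdiv_lt_0_compat; [exact d_pos | apply pow_lt; lra]. Qed.

Definition ramp_staircase : nat -> R -> R :=
  staircase (ramp p0 d) (fun n => s n - radius n) (fun n => s n + radius n).

(* The flattened pieces have total length sum_n 2 radius n < d / 2. *)
Lemma ramp_staircase_ge N : d / 2 + d / 2 ^ S N <= ramp_staircase N (p0 + d).
Proof.
  induction N as [| N IH].
  - cbn. unfold ramp. rewrite clamp_id by lra. lra.
  - pose proof (radius_pos N).
    pose proof (staircase_S_ge (ramp p0 d) (fun n => s n - radius n) (fun n => s n + radius n)
                  ltac:(intro; pose proof (radius_pos n); lra) ramp_mono N (p0 + d)).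
    pose proof (ramp_incr (s N - radius N) (s N + radius N) ltac:(lra)).
    fold ramp_staircase in *.
    assert (Hgeo : d / 2 ^ S N - 2 * radius N = d / 2 ^ S (S N)).
    { unfold radius. cbn [pow]. field. pose proof (pow_lt 2 N); lra. }
    lra.
Qed.

Lemma exists_flat_staircase : exists f : R -> R,
  (forall x y, x <= y -> 0 <= f y - f x <= y - x) /\
  (forall x, x <= p0 -> f x = 0) /\
  (forall x, p0 + d <= x -> f x = f (p0 + d)) /\
  (forall x, 0 <= f x <= d) /\
  d / 2 <= f (p0 + d) /\
  (forall n, exists r, 0 < r /\ forall x, s n - r <= x <= s n + r -> f x = f (s n)).
Proof.
  set (a n := s n - radius n); set (b n := s n + radius n).
  assert (Hab : forall n, a n <= b n)
    by (intro n; unfold a, b; pose proof (radius_pos n); lra).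
  assert (Hst_nonneg : forall N x, 0 <= ramp_staircase N x)
    by (intros; apply staircase_nonneg;
        [exact Hab | exact ramp_mono | intro; apply ramp_between]).
  destruct (choice (fun x l => (forall N, l <= ramp_staircase N x) /\
              (forall m, (forall N, m <= ramp_staircase N x) -> m <= l))) as [f Hf].
  { intro x. apply (seq_inf_exists _ 0). intro N. apply Hst_nonneg. }
  pose proof (staircase_limit_incr (ramp p0 d) a b Hab ramp_mono f Hf) as Hincr.
  assert (Hnonneg : forall x, 0 <= f x)
    by (intro x; apply (proj2 (Hf x)); intro N; apply Hst_nonneg).
  assert (Hle_ramp : forall x, f x <= ramp p0 d x) by (intro x; exact (proj1 (Hf x) O)).
  exists f. split; [| split; [| split; [| split; [| split]]]].
  - intros x y Hxy. pose proof (Hincr O x y Hxy). pose proof (ramp_incr x y Hxy).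
    cbn [staircase] in *. lra.
  - intros x Hx. pose proof (Hle_ramp x). pose proof (Hnonneg x).
    rewrite (ramp_left x Hx) in *. lra.
  - intros x Hx. pose proof (Hincr O (p0 + d) x Hx). cbn [staircase] in *.
    rewrite (ramp_right x Hx), (ramp_right (p0 + d) (Rle_refl _)) in *. lra.
  - intro x. pose proof (Hle_ramp x). pose proof (Hnonneg x). pose proof (ramp_between x). lra.
  - apply (proj2 (Hf _)). intro N. pose proof (ramp_staircase_ge N).
    assert (0 < d / 2 ^ S N) by (apply Rdiv_lt_0_compat; [lra | apply pow_lt; lra]). lra.
  - intro n. exists (radius n); split; [apply radius_pos |]. intros x Hx.
    apply (staircase_limit_const (ramp p0 d) a b Hab ramp_mono f Hf n); unfold a, b;
      [exact Hx | pose proof (radius_pos n); lra].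
Qed.
End RampStaircase.

Section PerturbedDarboux.
Variables (F f : R -> R) (s : nat -> R) (u v l1 l2 : R).
Hypothesis F_Darboux : Darboux F.
Hypothesis F_covers : forall a b, u <= a -> a < b -> b <= v -> covers F a b l1 l2.
Hypothesis s_dense : forall t lo hi e, lo < t < hi -> 0 < e ->
  exists n, lo < s n < hi /\ Rabs (F (s n) - F t) < e.
Hypothesis f_lip : forall x y, Rabs (f y - f x) <= Rabs (y - x).
Hypothesis f_range : forall x, 0 <= f x <= l2 - l1.
Hypothesis f_flat : forall n, exists r, 0 < r /\
  forall x, s n - r <= x <= s n + r -> f x = f (s n).

Lemma sum_close_at_seq a b p e : a < b -> a <= p <= b -> 0 < e ->
  exists n, a < s n < b /\ Rabs (F (s n) + f (s n) - (F p + f p)) < e.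
Proof.
  intros Hab Hp He. set (h := e / 3).
  assert (Hlohi : Rmax a (p - h) < Rmin b (p + h) /\ Rmax a (p - h) <= p <= Rmin b (p + h))
    by (unfold h, Rmax, Rmin; repeat destruct Rle_dec; lra).
  pose proof (Rmax_l a (p - h)); pose proof (Rmax_r a (p - h)).
  pose proof (Rmin_l b (p + h)); pose proof (Rmin_r b (p + h)).
  set (lo := Rmax a (p - h)) in *; set (hi := Rmin b (p + h)) in *.
  destruct (Darboux_close_inside F lo hi p h F_Darboux ltac:(lra) ltac:(lra) ltac:(unfold h; lra))
    as [t [Ht Hft]].
  destruct (s_dense t lo hi h Ht ltac:(unfold h; lra)) as [n [Hn Hfn]].
  exists n; split; [lra |].
  assert (Hfs : Rabs (f (s n) - f p) < h).
  { eapply Rle_lt_trans; [apply f_lip | apply Rabs_def1; lra]. }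
  apply Rabs_def2 in Hft, Hfn, Hfs. apply Rabs_def1; unfold h in *; lra.
Qed.

Lemma sum_reaches_from_seq a b n w :
  u <= a -> a < b -> b <= v -> a <= s n <= b ->
  between (F (s n) + f (s n)) l2 w -> exists c, a <= c <= b /\ F c + f c = w.
Proof.
  intros Hua Hab Hbv Hn Hw.
  destruct (f_flat n) as [r [Hr Hflat]].
  assert (Hlohi : Rmax a (s n - r) < Rmin b (s n + r) /\
                  Rmax a (s n - r) <= s n <= Rmin b (s n + r))
    by (unfold Rmax, Rmin; repeat destruct Rle_dec; lra).
  pose proof (Rmax_l a (s n - r)); pose proof (Rmax_r a (s n - r)).
  pose proof (Rmin_l b (s n + r)); pose proof (Rmin_r b (s n + r)).
  set (lo := Rmax a (s n - r)) in *; set (hi := Rmin b (s n + r)) in *.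
  (* f is constant on [lo, hi], where F alone takes every value of [l1, l2]. *)
  pose proof (f_range (s n)).
  destruct (F_covers lo hi ltac:(lra) ltac:(lra) ltac:(lra) (l2 - f (s n)) ltac:(lra))
    as [z [Hz Hfz]].
  destruct (Darboux_between F (s n) z (w - f (s n)) F_Darboux ltac:(red in Hw |- *; lra))
    as [c [Hc Hfc]].
  assert (Hclh : lo <= c <= hi) by (red in Hc; lra).
  exists c; split; [lra |]. rewrite (Hflat c) by lra. lra.
Qed.

Lemma ivt_on_sum_inside a b : u < a -> a <= b -> b < v -> ivt_on (fun x => F x + f x) a b.
Proof.
  intros Hua Hab Hbv w Hw.
  destruct (Rle_lt_or_eq _ _ Hab) as [Hlt | <-];
    [| exists a; split; [lra | red in Hw; lra]].
  destruct (Req_dec w (F a + f a)) as [-> | Hwa]; [exists a; split; [lra | reflexivity] |].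
  destruct (Req_dec w (F b + f b)) as [-> | Hwb]; [exists b; split; [lra | reflexivity] |].
  assert (Hpq : exists p q, a <= p <= b /\ a <= q <= b /\ F p + f p < w < F q + f q).
  { red in Hw. destruct (Rdichotomy _ _ Hwa), (Rdichotomy _ _ Hwb);
      [exfalso; lra | exists b, a; lra | exists a, b; lra | exfalso; lra]. }
  destruct Hpq as [p [q [Hp [Hq Hpq]]]].
  destruct (sum_close_at_seq a b p (w - (F p + f p)) Hlt Hp ltac:(lra)) as [n1 [Hn1 Hc1]].
  destruct (sum_close_at_seq a b q (F q + f q - w) Hlt Hq ltac:(lra)) as [n2 [Hn2 Hc2]].
  apply Rabs_def2 in Hc1, Hc2.
  (* Start from a point of the sequence on the side of w opposite to l2. *)
  destruct (Rle_dec w l2).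
  - apply (sum_reaches_from_seq a b n1); [lra | lra | lra | lra | red; lra].
  - apply (sum_reaches_from_seq a b n2); [lra | lra | lra | lra | red; lra].
Qed.
End PerturbedDarboux.

Theorem mainTheorem6 (F : R -> R) :
  Darboux F ->
  countable_set (fun x => continuity_pt F x) ->
  exists f : R -> R,
    continuity f /\
    (exists x y, f x <> f y) /\
    Darboux (fun x => F x + f x).
Proof.
  intros HD Hcont.
  destruct (uniformly_covering_interval F HD Hcont) as (u & v & l1 & l2 & Huv & Hl & Hcov).
  destruct (graph_dense_seq F) as [s Hs].
  set (d := Rmin ((v - u) / 3) ((l2 - l1) / 2)).
  assert (Hd : 0 < d) by (apply Rmin_pos; lra).
  assert (Hdv : d <= (v - u) / 3) by apply Rmin_l.
  assert (Hdl : d <= (l2 - l1) / 2) by apply Rmin_r.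
  destruct (exists_flat_staircase (u + d) d s Hd)
    as (f & Hincr & Hleft & Hright & Hrange & Hhalf & Hflat).
  exists f; split; [| split].
  - exact (lipschitz_continuity f (Rabs_incr_le f Hincr)).
  - exists (u + d), (u + d + d). rewrite Hleft by lra. lra.
  - apply Darboux_of_ivt_on, (ivt_on_of_cover _ u (u + d) (u + d + d) v); try lra.
    + intros a b Hab Hb. apply (ivt_on_add_const F f a b 0 HD Hab).
      intros z Hz; apply Hleft; lra.
    + intros a b Ha Hab Hb.
      apply (ivt_on_sum_inside F f s u v l1 l2 HD Hcov Hs (Rabs_incr_le f Hincr)); try lra.
      * intro x; pose proof (Hrange x); lra.
      * exact Hflat.
    + intros a b Ha Hab. apply (ivt_on_add_const F f a b (f (u + d + d)) HD Hab).
      intros z Hz; apply Hright; lra.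
Qed.
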